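(* Let $\mathbb{K}$ be a field equipped with a non-Archimedean valuation $|\cdot|$, and assume that the characteristic of $\mathbb{K}$ is not $2$. Let $\mathcal{X}$ be a non-Archimedean linear space over $\mathbb{K}$ with non-Archimedean norm $\|\cdot\|$. Write $|2|$ for the valuation of the element $2=1+1\in\mathbb{K}$ (a positive real number). Then for all $x, y \in \mathcal{X}$, \begin{align*} \Big|\|x\|-\|y\|\Big| &\leq \frac{2}{|2|}\max\{\|x-y\|, \|x+y\|\}-(\|x\|+\|y\|)\\ &\leq \frac{2}{|2|}\max\{\|x\|, \|y\|\}-(\|x\|+\|y\|) \end{align*} and \begin{align*} \Big|\|x\|-\|y\|\Big| \leq \|x\|+\|y\|-\frac{2}{|2|}\Big|\|x+y\|-\|x-y\|\Big|. \end{align*} In particular, if $|2|=1$, then for all $x,y\in\mathcal{X}$, \begin{align*} \Big|\|x\|-\|y\|\Big| &\leq 2\max\{\|x-y\|, \|x+y\|\}-(\|x\|+\|y\|)\leq 2\max\{\|x\|, \|y\|\}-(\|x\|+\|y\|) \end{align*} and \begin{align*} \Big|\|x\|-\|y\|\Big| \leq \|x\|+\|y\|-2\Big|\|x+y\|-\|x-y\|\Big|. \end{align*}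
   Context: A non-Archimedean valuation on a field $\mathbb{K}$ is a map $|\cdot|:\mathbb{K}\to[0,\infty)$ such that: (i) $|\lambda|=0$ implies $\lambda=0$; (ii) $|\lambda\mu|=|\lambda||\mu|$ for all $\lambda,\mu\in\mathbb{K}$; (iii) $|\lambda+\mu|\le\max\{|\lambda|,|\mu|\}$ for all $\lambda,\mu\in\mathbb{K}$. A non-Archimedean linear space over such a field $\mathbb{K}$ is a vector space $\mathcal{X}$ over $\mathbb{K}$ with a map $\|\cdot\|:\mathcal{X}\to[0,\infty)$ such that: (i) $\|x\|=0$ implies $x=0$; (ii) $\|\lambda x\|=|\lambda|\|x\|$ for all $\lambda\in\mathbb{K}$, $x\in\mathcal{X}$; (iii) $\|x+y\|\le\max\{\|x\|,\|y\|\}$ for all $x,y\in\mathcal{X}$. In the statement, the numerator $2$ in $\frac{2}{|2|}$ is the real number $2$, and the outer absolute values $|\cdot|$ applied to differences of norms are ordinary real absolute values. *)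

From HB Require Import structures.
From mathcomp Require Import all_boot all_order all_algebra.
From mathcomp Require Import reals.
Set Implicit Arguments. Unset Strict Implicit. Unset Printing Implicit Defensive.
Import Order.TTheory GRing.Theory Num.Theory.
Local Open Scope ring_scope.

Definition nonarch_valuation (K : fieldType) (R : realType) (v : K -> R) : Prop :=
  [/\ forall a, 0 <= v a,
      forall a, v a = 0 -> a = 0,
      forall a b, v (a * b) = v a * v b
    & forall a b, v (a + b) <= Num.max (v a) (v b)].

Definition nonarch_norm (K : fieldType) (R : realType) (v : K -> R)
    (X : lmodType K) (N : X -> R) : Prop :=
  [/\ forall x, 0 <= N x,
      forall x, N x = 0 -> x = 0,
      forall (a : K) (x : X), N (a *: x) = v a * N x
    & forall x y, N (x + y) <= Num.max (N x) (N y)].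

From HB Require Import structures.
From mathcomp Require Import all_boot all_order all_algebra.
From mathcomp Require Import reals.
From mathcomp Require Import lra.
Set Implicit Arguments.
Unset Strict Implicit.
Unset Printing Implicit Defensive.

Import Order.TTheory GRing.Theory Num.Theory.
Local Open Scope ring_scope.

(* Write c := |2| and M := max(||x - y||, ||x + y||).  The ultrametric
   inequality gives M <= max(||x||, ||y||) directly, and applied to
   2x = (x - y) + (x + y) and 2y = (x + y) - (x - y) it gives
   c max(||x||, ||y||) <= M.  The reverse triangle
   inequality | ||u|| - ||w|| | <= ||u - w||, a consequence of the ultrametric
   one, applied to (x + y) - (x - y) = 2y and (x + y) - (y - x) = 2x gives
   | ||x + y|| - ||x - y|| | <= c min(||x||, ||y||).  Since
   | a - b | = 2 max(a, b) - (a + b) = a + b - 2 min(a, b), these bounds are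
   exactly the three inequalities. *)

Section DistanceBounds.
Variable R : realDomainType.
Implicit Types a b m : R.

Lemma ler_dist_max a b m : Num.max a b <= m -> `|a - b| <= 2 * m - (a + b).
Proof. by rewrite ge_max => /andP[am bm]; rewrite ler_norml; apply/andP; split; lra. Qed.

Lemma ler_dist_min a b m : m <= Num.min a b -> `|a - b| <= a + b - 2 * m.
Proof. by rewrite le_min => /andP[ma mb]; rewrite ler_norml; apply/andP; split; lra. Qed.

End DistanceBounds.

Section Ultrametric.
Variables (R : realDomainType) (V : zmodType) (N : V -> R).
Hypotheses (N_ge0 : forall x, 0 <= N x) (NN : forall x, N (- x) = N x)
  (ND : forall x y, N (x + y) <= Num.max (N x) (N y)).

Lemma ultrametricB x y : N (x - y) <= Num.max (N x) (N y).
Proof. by rewrite -(NN y); exact: ND. Qed.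

Lemma ultrametric_dist x y : `|N x - N y| <= N (x - y).
Proof.
have Nx : N x <= Num.max (N y) (N (x - y)).
  by have := ND y (x - y); rewrite addrC subrK.
have Ny : N y <= Num.max (N x) (N (x - y)).
  by have := ND x (- (x - y)); rewrite NN opprB addrC subrK.
move: Nx Ny (N_ge0 x) (N_ge0 y) (N_ge0 (x - y)).
rewrite !le_max ler_norml => /orP[] ? /orP[] ? *; apply/andP; split; lra.
Qed.

Lemma ultrametric_max_addsub x y :
  Num.max (N (x - y)) (N (x + y)) <= Num.max (N x) (N y).
Proof. by rewrite ge_max ultrametricB ND. Qed.

Lemma ultrametric_max_mul2n x y :
  Num.max (N (x *+ 2)) (N (y *+ 2)) <= Num.max (N (x - y)) (N (x + y)).
Proof.
rewrite ge_max !mulr2n; apply/andP; split.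
  by have := ND (x - y) (x + y); rewrite addrCA subrK.
have := ultrametricB (x + y) (x - y).
by rewrite maxC opprB addrC addrA subrK.
Qed.

Lemma ultrametric_dist_addsub x y :
  `|N (x + y) - N (x - y)| <= Num.min (N (x *+ 2)) (N (y *+ 2)).
Proof.
have e2x : x + y - (y - x) = x *+ 2 by rewrite opprB addrCA addrK mulr2n.
have e2y : x + y - (x - y) = y *+ 2 by rewrite opprB addrCA [x + y]addrC addrK mulr2n.
rewrite le_min -e2x -e2y ultrametric_dist andbT.
by rewrite -(NN (x - y)) opprB ultrametric_dist.
Qed.

End Ultrametric.

Section NonArchimedeanNorm.
Variables (R : realType) (K : fieldType) (v : K -> R) (X : lmodType K) (N : X -> R).
Hypotheses (hv : nonarch_valuation v) (hN : nonarch_norm v N).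

Lemma nonarch_valuation_gt0 a : a != 0 -> 0 < v a.
Proof.
case: hv => v_ge0 v_eq0 _ _ a0; rewrite lt_def v_ge0 andbT.
by apply: contra a0 => /eqP/v_eq0->.
Qed.

Lemma nonarch_valuationN1 : v (-1) = 1.
Proof.
case: hv => v_ge0 _ vM _.
have v1 : v 1 = 1.
  have sq : v 1 * v 1 = v 1 by rewrite -vM mulr1.
  by have := nonarch_valuation_gt0 (oner_neq0 K); nra.
have sq : v (-1) * v (-1) = 1 by rewrite -vM mulrNN mulr1.
by have := v_ge0 (-1); nra.
Qed.

Lemma nonarch_normN x : N (- x) = N x.
Proof. by case: hN => _ _ NZ _; rewrite -scaleN1r NZ nonarch_valuationN1 mul1r. Qed.

Lemma nonarch_norm_mul2n x : N (x *+ 2) = v 2%:R * N x.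
Proof. by case: hN => _ _ NZ _; rewrite -scaler_nat NZ. Qed.

Hypothesis two_neq0 : (2%:R : K) != 0.

Let v2_gt0 : 0 < v 2%:R := nonarch_valuation_gt0 two_neq0.

Lemma nonarch_dist_le_max_addsub x y :
  `|N x - N y| <= 2 / v 2%:R * Num.max (N (x - y)) (N (x + y)) - (N x + N y).
Proof.
case: hN => _ _ _ ND; rewrite -mulrA; apply: ler_dist_max.
rewrite ler_pdivlMl // (maxr_pMr _ _ (ltW v2_gt0)) -!nonarch_norm_mul2n.
exact: (ultrametric_max_mul2n nonarch_normN ND x y).
Qed.

Lemma nonarch_max_addsub_le x y :
  2 / v 2%:R * Num.max (N (x - y)) (N (x + y)) - (N x + N y)
    <= 2 / v 2%:R * Num.max (N x) (N y) - (N x + N y).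
Proof.
case: hN => _ _ _ ND; rewrite lerD2r; apply: ler_wpM2l.
  by rewrite divr_ge0 // ltW.
exact: (ultrametric_max_addsub nonarch_normN ND x y).
Qed.

Lemma nonarch_dist_le_dist_addsub x y :
  `|N x - N y| <= N x + N y - 2 / v 2%:R * `|N (x + y) - N (x - y)|.
Proof.
case: hN => N_ge0 _ _ ND; rewrite -mulrA; apply: ler_dist_min.
rewrite ler_pdivrMl // (minr_pMr _ _ (ltW v2_gt0)) -!nonarch_norm_mul2n.
exact: (ultrametric_dist_addsub N_ge0 nonarch_normN ND x y).
Qed.

End NonArchimedeanNorm.

Theorem theorem2p1 (R : realType) (K : fieldType) (v : K -> R)
    (X : lmodType K) (N : X -> R)
    (hv : nonarch_valuation v) (hchar : (2%:R : K) != 0)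
    (hN : nonarch_norm v N) :
  (forall x y : X,
     `|N x - N y| <= 2 / v 2%:R * Num.max (N (x - y)) (N (x + y)) - (N x + N y)
     /\ 2 / v 2%:R * Num.max (N (x - y)) (N (x + y)) - (N x + N y)
        <= 2 / v 2%:R * Num.max (N x) (N y) - (N x + N y)
     /\ `|N x - N y| <= N x + N y - 2 / v 2%:R * `|N (x + y) - N (x - y)|)
  /\
  (v 2%:R = 1 ->
   forall x y : X,
     `|N x - N y| <= 2 * Num.max (N (x - y)) (N (x + y)) - (N x + N y)
     /\ 2 * Num.max (N (x - y)) (N (x + y)) - (N x + N y)
        <= 2 * Num.max (N x) (N y) - (N x + N y)
     /\ `|N x - N y| <= N x + N y - 2 * `|N (x + y) - N (x - y)|).
Proof.
have general x y := conj (nonarch_dist_le_max_addsub hv hN hchar x y)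
  (conj (nonarch_max_addsub_le hv hN hchar x y)
        (nonarch_dist_le_dist_addsub hv hN hchar x y)).
by split=> // v2 x y; have := general x y; rewrite v2 divr1.
Qed.
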